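(* Let $W$ be $\{0,1\}$-valued, $x\in\mathbb X$, $\preceq$ a total order on $\{X\Subset\mathbb X\mid x\in X\}$, and for each $e\in\mathfrak h(x)$ a total order (also $\preceq$) on $e'=e\setminus\{x\}$. Let $e\in\mathfrak h(x)$, $x'\in e'$, and $y\in\mathbb X$ such that $\{y\}\notin\mathfrak h_e/e'_{\prec x'}$. Then \[ \deg_{\mathfrak h_e/e'_{\prec x'}}(y)\le\deg_{\mathfrak h}(y), \] and if additionally $x\neq y$ or $\{x\}\notin\mathfrak h$, then also $\{y\}\notin\mathfrak h$.
   Context: $\mathbb X$ is a finite or countably infinite set; $e\Subset\mathbb X$ means finite subset. $W:\{X\Subset\mathbb X\}\to\{0,1\}$ and $\mathfrak h=\{e\Subset\mathbb X\mid W(e)=0\}$. For a set $\mathfrak g$ of finite subsets of $\mathbb X$ and $y\in\mathbb X$, $\mathfrak g(y)=\{e\in\mathfrak g\mid y\in e\}$ and $\deg_{\mathfrak g}(y)=|\mathfrak g(y)|\in\{0,1,\dots\}\cup\{\infty\}$. For a set $\mathfrak g$ of finite subsets and $B\Subset\mathbb X$, define $\mathfrak g/B=\{e\setminus B\mid e\in\mathfrak g\}\cup\{\{y\}\mid y\in B\}$ (this is the set of $e$ with $W_{\mathfrak g}(e\mid B)=0$ for the hard-core interaction $W_{\mathfrak g}=\mathbf 1_{\{\cdot\notin\mathfrak g\}}$ and the conditional interaction $W(X\mid B)=\prod_{C\subset B}W(X\cup C)$ if $X\cap B=\varnothing$, $0$ if $X=\{y\}$ with $y\in B$, $1$ otherwise).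 For $e\in\mathfrak h(x)$ let \[ \mathfrak h_e=\{b\setminus\{x\}\mid b\in\mathfrak h(x),\ b\prec e\}\cup\big(\mathfrak h\setminus(\mathfrak h(x)\setminus\{e\})\big), \] where $\prec$ is the strict part of $\preceq$; and for $x'\in e'$, $e'_{\prec x'}=\{x''\in e'\mid x''\prec x'\}$. *)

From mathcomp Require Import all_boot finmap.
From mathcomp Require Import boolp classical_sets cardinality.
Set Implicit Arguments. Unset Strict Implicit. Unset Printing Implicit Defensive.
Local Open Scope classical_set_scope.
Local Open Scope fset_scope.

(* The ground set X is a countType T (finite or countably infinite);
   finite subsets of X are elements of {fset T};
   sets of finite subsets are elements of set {fset T}. *)

Definition hset (T : countType) (W : {fset T} -> nat) : set {fset T} :=
  [set e | W e = 0%N].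

Definition gat (T : countType) (g : set {fset T}) (y : T) : set {fset T} :=
  [set e | g e /\ y \in e].

(* extended naturals N ∪ {∞}: None = ∞ *)
Definition extnat := option nat.
Definition extnat_le (a b : extnat) : Prop :=
  match a, b with
  | _, None => True
  | None, Some _ => False
  | Some m, Some n => (m <= n)%N
  end.

Definition deg (T : countType) (g : set {fset T}) (y : T) : extnat :=
  if pselect (finite_set (gat g y)) then Some #|` fset_set (gat g y)| else None.

Definition quot (T : countType) (g : set {fset T}) (B : {fset T}) : set {fset T} :=
  [set c | (exists2 e, g e & c = e `\` B) \/ (exists2 y, y \in B & c = [fset y])].

Definition total_order_on (A : Type) (D : set A) (R : A -> A -> Prop) : Prop :=
  [/\ (forall a, D a -> R a a),
      (forall a b, D a -> D b -> R a b -> R b a -> a = b),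
      (forall a b c, D a -> D b -> D c -> R a b -> R b c -> R a c) &
      (forall a b, D a -> D b -> R a b \/ R b a)].

Definition strict (A : Type) (R : A -> A -> Prop) (a b : A) : Prop := R a b /\ a <> b.

Definition h_e (T : countType) (h : set {fset T}) (x : T)
    (le : {fset T} -> {fset T} -> Prop) (e : {fset T}) : set {fset T} :=
  [set c | exists2 b, gat h x b /\ strict le b e & c = b `\ x]
  `|` (h `\` (gat h x `\` [set e])).

Definition below (T : countType) (e' : {fset T}) (R : T -> T -> Prop) (x' : T)
  : {fset T} :=
  [fset x'' in e' | `[< strict R x'' x' >]].

From mathcomp Require Import all_boot finmap.
From mathcomp Require Import boolp classical_sets cardinality.
Local Open Scope classical_set_scope.
Local Open Scope fset_scope.

(* Every set of h_e / B through y is the image of a set of h through y under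
   b |-> (b \ {x}) \ B (or b |-> b \ B when b is not in h(x) \ {e}): the
   singletons {z}, z in B, added by the quotient never contain y, because
   {y} is not in the quotient forces y to lie outside B.  A map onto bounds the
   degree.  Conversely a singleton {y} of h avoiding x survives in h_e, hence
   in the quotient. *)

Lemma extnat_le_trans (a b c : extnat) :
  extnat_le a b -> extnat_le b c -> extnat_le a c.
Proof. by case: a b c => [m|] [n|] [p|] //=; apply: leq_trans. Qed.

Lemma deg_le_image (T : countType) (g1 g2 : set {fset T}) (y : T)
    (f : {fset T} -> {fset T}) :
  (gat g1 y `<=` f @` gat g2 y)%classic -> extnat_le (deg g1 y) (deg g2 y).
Proof.
move=> sub; rewrite /deg.
case: (pselect (finite_set (gat g2 y))) => [fin2|]; last by case: pselect.
have fin1 : finite_set (gat g1 y).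
  exact: sub_finite_set sub (finite_image _ fin2).
case: pselect => // _ /=.
move: sub; rewrite (fset_set_sub fin1 (finite_image f fin2)) (fset_set_image _ fin2).
move=> /fsubset_leq_card le_card; apply: leq_trans le_card _.
exact: leq_imfset_card.
Qed.

Section Quotient.
Variables (T : countType) (g : set {fset T}) (B : {fset T}).

Lemma quot_fset1_mem (y : T) : y \in B -> quot g B [fset y].
Proof. by move=> yB; right; exists y. Qed.

Lemma quot_fset1 (y : T) : g [fset y] -> quot g B [fset y].
Proof.
move=> gy; have [/quot_fset1_mem //|yNB] := boolP (y \in B).
left; exists [fset y] => //; apply/fsetP => z; rewrite !inE.
by case: eqP => [->|]; rewrite ?yNB ?andbF.
Qed.

Lemma gat_quot_sub (y : T) :
  y \notin B -> (gat (quot g B) y `<=` (fun c => (c `\` B)%fset) @` gat g y)%classic.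
Proof.
move=> yNB c [[[b gb ->]|[z zB ->]] yc].
  by exists b => //; split=> //; move: yc; rewrite inE => /andP[].
by move: yc yNB; rewrite inE => /eqP ->; rewrite zB.
Qed.

Lemma deg_quot_le (y : T) :
  y \notin B -> extnat_le (deg (quot g B) y) (deg g y).
Proof. by move/gat_quot_sub/deg_le_image. Qed.

End Quotient.

Section Reduction.
Variables (T : countType) (h : set {fset T}) (x : T).
Variables (le : {fset T} -> {fset T} -> Prop) (e : {fset T}).

Lemma h_e_notin (c : {fset T}) : h c -> x \notin c -> h_e h x le e c.
Proof. by move=> hc xNc; right; split=> // -[[_ xc] _]; rewrite xc in xNc. Qed.

Lemma gat_h_e_sub (y : T) :
  (gat (h_e h x le e) y
   `<=` (fun b => if (x \in b) && (b != e) then (b `\ x)%fset else b) @` gat h y)%classic.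
Proof.
move=> c [[[b [[hb xb] [_ /eqP neq_be]] ->]|[hc Nc]] yc].
  exists b; last by rewrite xb neq_be.
  by split=> //; move: yc; rewrite inE => /andP[].
exists c => //; case: ifP => // /andP[xc /eqP neq_ce].
by exfalso; apply: Nc.
Qed.

Lemma deg_h_e_le (y : T) : extnat_le (deg (h_e h x le e) y) (deg h y).
Proof. exact: deg_le_image (@gat_h_e_sub y). Qed.

End Reduction.

Theorem corollary5p4 (T : countType) (W : {fset T} -> nat) (x : T)
    (le : {fset T} -> {fset T} -> Prop) (ord : {fset T} -> T -> T -> Prop)
    (e : {fset T}) (x' y : T) :
  (forall X, W X = 0%N \/ W X = 1%N) ->
  total_order_on [set X : {fset T} | x \in X] le ->
  (forall f, gat (hset W) x f -> total_order_on [set z | z \in f `\ x] (ord f)) ->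
  gat (hset W) x e ->
  x' \in e `\ x ->
  ~ quot (h_e (hset W) x le e) (below (e `\ x) (ord e) x') [fset y] ->
  extnat_le (deg (quot (h_e (hset W) x le e) (below (e `\ x) (ord e) x')) y)
            (deg (hset W) y)
  /\ ((x <> y \/ ~ hset W [fset x]) -> ~ hset W [fset y]).
Proof.
move=> _ _ _ _ _ notQy.
set B := below (e `\ x) (ord e) x'.
have yNB : y \notin B by apply: contra_notN notQy; apply: quot_fset1_mem.
split.
  apply: extnat_le_trans (deg_quot_le _ _ _ _ yNB) _.
  exact: deg_h_e_le.
move=> xNy hy; apply/notQy/quot_fset1/h_e_notin => //.
rewrite inE; apply/eqP => eq_xy; rewrite -eq_xy in hy.
by case: xNy.
Qed.
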